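(* Let $k\in\mathbb Z_{\ge1}$ and $\lambda_1,\lambda_2\in\mathbb C$. Then $\widetilde{\mathrm{Sol}}_{(k,k)}(-\lambda_1,-\lambda_2)\ne\{0\}$ if and only if $(\lambda_1,\lambda_2)=(\frac12(2-k-s),\frac12(2-k+s))$ for some $s\in\mathbb C$ (equivalently $\lambda_1+\lambda_2=2-k$), and in that case $\widetilde{\mathrm{Sol}}_{(k,k)}(-\frac12(2-k-s),-\frac12(2-k+s))=\mathbb C\,p_c^{(s;k)}(t)$.
   Context: Let $\vartheta_t=t\frac d{dt}$. For $a,b,\mu\in\mathbb C$ define $D^{(a,b)}(\mu;t)=\frac d{dt}+(\mu+a-\frac b2-1)(a-\vartheta_t)+\frac14t(a-1-\vartheta_t)(a-\vartheta_t)(b-\vartheta_t)$, and $D^{(a,b)}(\mu;-t)=-\frac d{dt}+(\mu+a-\frac b2-1)(a-\vartheta_t)-\frac14t(a-1-\vartheta_t)(a-\vartheta_t)(b-\vartheta_t)$ (substitution $t\mapsto -t$). For $k,\ell\in\mathbb Z_{\ge0}$, $\widetilde{\mathrm{Sol}}_{(k,\ell)}(-\lambda_1,-\lambda_2)=\{p\in\mathbb C[t]:\deg p\le\min(k,\ell),\ D^{(k,\ell)}(\lambda_1;t)p=0,\ D^{(\ell,k)}(\lambda_2;-t)p=0\}$. Cayley continuants: $\mathrm{Cay}_0(x;y)=1$, $\mathrm{Cay}_1(x;y)=x$, and for $m\ge2$, $\mathrm{Cay}_m(x;y)$ is the determinant of the $m\times m$ tridiagonal matrix with diagonal entries all $x$,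 superdiagonal entries $1,2,\dots,m-1$ and subdiagonal entries $y,y-1,\dots,y-m+2$; equivalently $\mathrm{Cay}_m(x;y)=\sum_{j=0}^m\binom mj(\frac{x+y}2)^{\underline j}(\frac{x-y}2)^{\overline{m-j}}$ with $r^{\underline j}=r(r-1)\cdots(r-j+1)$, $r^{\overline j}=r(r+1)\cdots(r+j-1)$. Polynomial: $p_c^{(s;k)}(t)=\sum_{m=0}^k\frac1{2^m}\binom km\mathrm{Cay}_m(s;k)t^m$. *)

From HB Require Import structures.
From mathcomp Require Import all_boot all_order all_algebra.
From mathcomp Require Import complex.
From mathcomp Require Import Rstruct.
Set Implicit Arguments. Unset Strict Implicit. Unset Printing Implicit Defensive.
Import Order.TTheory GRing.Theory Num.Theory.
Local Open Scope ring_scope.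

Notation CC := (complex Rdefinitions.R).

Definition theta (p : {poly CC}) : {poly CC} := 'X * p^`().

Definition cmt (c : CC) (p : {poly CC}) : {poly CC} := c *: p - theta p.

Definition Dplus (a b mu : CC) (p : {poly CC}) : {poly CC} :=
  p^`() + (mu + a - b / 2 - 1) *: cmt a p
  + (1 / 4 : CC) *: ('X * cmt (a - 1) (cmt a (cmt b p))).

(* D^{(a,b)}(mu; -t) p  (substitution t -> -t) *)
Definition Dminus (a b mu : CC) (p : {poly CC}) : {poly CC} :=
  - p^`() + (mu + a - b / 2 - 1) *: cmt a p
  - (1 / 4 : CC) *: ('X * cmt (a - 1) (cmt a (cmt b p))).

(* Solt k l lam1 lam2 p  <->  p \in \widetilde{Sol}_{(k,l)}(-lam1,-lam2) *)
Definition Solt (k l : nat) (lam1 lam2 : CC) (p : {poly CC}) : Prop :=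
  leq (size p) (minn k l).+1 /\
  Dplus k%:R l%:R lam1 p = 0 /\ Dminus l%:R k%:R lam2 p = 0.

(* Cayley continuant: determinant of the m x m tridiagonal matrix with
   diagonal x, superdiagonal 1,2,...,m-1, subdiagonal y, y-1, ..., y-m+2.
   (For m = 0 the empty determinant is 1, for m = 1 it is x.) *)
Definition Cay (m : nat) (x y : CC) : CC :=
  \det (\matrix_(i < m, j < m)
          (if i == j then x
           else if j == i.+1 :> nat then (i.+1)%:R
           else if i == j.+1 :> nat then y - j%:R
           else 0)).

Definition pc (s : CC) (k : nat) : {poly CC} :=
  \sum_(m < k.+1) ((1 / 2 ^+ m) * (binomial k m)%:R * Cay m s (k%:R)) *: 'X^m.

(* Adding the two equations gives (lam1 + lam2 + k - 2) (k - theta) p = 0.  If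
   lam1 + lam2 <> 2 - k, then (k - theta) p = 0 kills the linear and cubic terms
   of D^{(k,k)}(lam1; t), so p' = 0 and therefore k p = 0.  If lam1 + lam2 = 2 - k,
   the second operator is minus the first, whose coefficient recurrence expresses
   p_{j+1} through p_j and p_{j-1}: solutions are determined by p(0).  The
   polynomial p_c^{(s;k)} is one of them, because its coefficient recurrence is
   the three-term recurrence of the Cayley continuants obtained by expanding the
   tridiagonal determinant along its last row. *)

From mathcomp Require Import all_boot all_order all_algebra.
From mathcomp Require Import complex Rstruct ring zify.
Import GRing.Theory Num.Theory.
Local Open Scope ring_scope.

Definition Cay_entry (x y : CC) (i j : nat) : CC :=
  if i == j then x
  else if j == i.+1 then i.+1%:R
  else if i == j.+1 then y - j%:R
  else 0.

Lemma Cay_entry_eq0 x y i j :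
  i != j -> j != i.+1 -> i != j.+1 -> Cay_entry x y i j = 0.
Proof. by rewrite /Cay_entry => /negbTE-> /negbTE-> /negbTE->. Qed.

Lemma Cay_entry_diag x y i : Cay_entry x y i i = x.
Proof. by rewrite /Cay_entry eqxx. Qed.

Lemma Cay_entry_super x y i : Cay_entry x y i i.+1 = i.+1%:R.
Proof. by rewrite /Cay_entry eqxx ifF //; apply/negbTE/eqP; lia. Qed.

Lemma Cay_entry_sub x y i : Cay_entry x y i.+1 i = y - i%:R.
Proof. by rewrite /Cay_entry eqxx !ifF //; apply/negbTE/eqP; lia. Qed.

Lemma CayE m x y : Cay m x y = \det (\matrix_(i < m, j < m) Cay_entry x y i j).
Proof. by congr (\det _); apply/matrixP => i j; rewrite !mxE. Qed.

Lemma Cay0 x y : Cay 0 x y = 1.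
Proof. exact: det_mx00. Qed.

Lemma Cay1 x y : Cay 1 x y = x.
Proof. by rewrite /Cay det_mx11 mxE. Qed.

Lemma row'_col'_max_mx (R : Type) n (f : nat -> nat -> R) :
  row' ord_max (col' ord_max (\matrix_(i < n.+1, j < n.+1) f i j))
  = \matrix_(i < n, j < n) f i j.
Proof. by apply/matrixP => i j; rewrite !mxE !lift_max. Qed.

Lemma det_Cay_minor m x y :
  \det (row' ord_max (col' (widen_ord (leqnSn m.+1) ord_max)
          (\matrix_(i < m.+2, j < m.+2) Cay_entry x y i j)))
  = m.+1%:R * Cay m x y.
Proof.
set N := row' _ _.
rewrite (expand_det_col _ ord_max) big_ord_recr /= big1 ?add0r => [|i _]; last first.
  rewrite !mxE Cay_entry_eq0 ?mul0r //= /bump leqnn ltnNge (ltnW (ltn_ord i)) /=;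
    apply/eqP; have := ltn_ord i; lia.
rewrite /cofactor.
have -> : row' ord_max (col' ord_max N) = \matrix_(i < m, j < m) Cay_entry x y i j.
  apply/matrixP => i j; rewrite !mxE !lift_max /= /bump.
  have hj : (m <= j)%N = false by rewrite leqNgt ltn_ord.
  by rewrite hj add0n hj.
rewrite /N !mxE /= /bump leqnn ltnn add1n Cay_entry_super.
by rewrite -signr_odd addnn odd_double mul1r -CayE.
Qed.

Lemma Cay_rec m x y :
  Cay m.+2 x y = x * Cay m.+1 x y - m.+1%:R * (y - m%:R) * Cay m x y.
Proof.
rewrite CayE (expand_det_row _ ord_max) !big_ord_recr /=.
rewrite big1 ?add0r => [|j _]; last first.
  by rewrite mxE Cay_entry_eq0 ?mul0r //=; apply/eqP; have := ltn_ord j; lia.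
rewrite !mxE /= Cay_entry_sub Cay_entry_diag /cofactor det_Cay_minor.
rewrite row'_col'_max_mx -CayE.
have sign_odd : (-1) ^+ (m.+1 + m) = -1 :> CC.
  by rewrite -signr_odd addSn addnn /= odd_double.
have sign_even n : (-1) ^+ (n + n) = 1 :> CC.
  by rewrite -signr_odd addnn odd_double.
rewrite sign_odd sign_even; ring.
Qed.

Lemma coef_cmt a (p : {poly CC}) j : (cmt a p)`_j = (a - j%:R) * p`_j.
Proof.
rewrite /cmt /theta coefB coefZ coefXM mulrBl; case: j => [|j] /=.
  by rewrite !mulr0n !mul0r subr0.
by rewrite coef_deriv mulr_natl.
Qed.

Lemma coef_Dplus a b mu (p : {poly CC}) j :
  (Dplus a b mu p)`_j =
    p`_j.+1 *+ j.+1 + (mu + a - b / 2 - 1) * ((a - j%:R) * p`_j)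
    + 1 / 4 * (if j is i.+1 then
                 (a - 1 - i%:R) * ((a - i%:R) * ((b - i%:R) * p`_i))
               else 0).
Proof.
rewrite /Dplus !coefD !coefZ coef_deriv coefXM coef_cmt.
by case: j => [|j] //=; rewrite !coef_cmt.
Qed.

Lemma DplusZ a b mu c (p : {poly CC}) :
  Dplus a b mu (c *: p) = c *: Dplus a b mu p.
Proof.
apply/polyP => j; rewrite coefZ !coef_Dplus.
by case: j => [|j]; rewrite !coefZ -?mulrnAr; ring.
Qed.

Lemma DplusB a b mu (p q : {poly CC}) :
  Dplus a b mu (p - q) = Dplus a b mu p - Dplus a b mu q.
Proof.
apply/polyP => j; rewrite coefB !coef_Dplus.
by case: j => [|j]; rewrite !coefB ?mulrnBl; ring.
Qed.

Lemma Dplus_eq0_coef0 a b mu (p : {poly CC}) :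
  Dplus a b mu p = 0 -> p`_0 = 0 -> p = 0.
Proof.
move=> hD hp0; have hcoef j : (Dplus a b mu p)`_j = 0 by rewrite hD coef0.
suff hp n : p`_n = 0 /\ p`_n.+1 = 0.
  by apply/polyP => n; rewrite coef0; case: (hp n).
elim: n => [|n [IHn IHn1]].
  by split=> //; move: (hcoef 0%N); rewrite coef_Dplus hp0 !mulr0 !addr0.
split=> //; move/eqP: (hcoef n.+1).
by rewrite coef_Dplus IHn IHn1 !mulr0 !addr0 mulrn_eq0 => /eqP.
Qed.

Lemma Dplus_add_Dminus a b mu1 mu2 (p : {poly CC}) :
  Dplus a b mu1 p + Dminus a b mu2 p = (mu1 + mu2 + 2 * a - b - 2) *: cmt a p.
Proof.
rewrite /Dplus /Dminus.
have -> : mu1 + mu2 + 2 * a - b - 2 = (mu1 + a - b / 2 - 1) + (mu2 + a - b / 2 - 1).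
  by field.
by rewrite -!mul_polyC polyCD; ring.
Qed.

Lemma cmt0 c : cmt c 0 = 0.
Proof. by rewrite /cmt /theta deriv0 mulr0 scaler0 subr0. Qed.

Lemma Dplus_cmt_eq0 (a b mu : CC) (p : {poly CC}) :
  a != 0 -> cmt a p = 0 -> Dplus a b mu p = 0 -> p = 0.
Proof.
move=> ha hc; have hcc : cmt a (cmt b p) = 0.
  by apply/polyP => j; rewrite !coef_cmt mulrCA -coef_cmt hc !coef0 mulr0.
rewrite /Dplus hc hcc cmt0 mulr0 !scaler0 !addr0 => hd.
move: hc; rewrite /cmt /theta hd mulr0 subr0 => /eqP.
by rewrite scaler_eq0 (negbTE ha) => /eqP.
Qed.

Lemma Solt_diag k lam1 lam2 (p : {poly CC}) :
  Solt k k lam1 lam2 p <->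
  [/\ (size p <= k.+1)%N, Dplus k%:R k%:R lam1 p = 0
    & (lam1 + lam2 + k%:R - 2) *: cmt k%:R p = 0].
Proof.
have -> : (lam1 + lam2 + k%:R - 2) *: cmt k%:R p
          = Dplus k%:R k%:R lam1 p + Dminus k%:R k%:R lam2 p.
  by rewrite Dplus_add_Dminus; congr (_ *: _); ring.
rewrite /Solt minnn; split=> [[-> [-> ->]]|[-> hD]]; first by rewrite addr0.
by rewrite hD add0r => ->.
Qed.

Lemma natr_mul_bin_left (R : pzRingType) n m :
  m.+1%:R * 'C(n, m.+1)%:R = (n%:R - m%:R) * 'C(n, m)%:R :> R.
Proof.
rewrite -natrM mul_bin_left natrM; case: (leqP m n) => [/natrB -> //|lt_nm].
by rewrite bin_small // !mulr0.
Qed.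

Lemma pc_poly s k :
  pc s k = \poly_(m < k.+1) (1 / 2 ^+ m * 'C(k, m)%:R * Cay m s k%:R).
Proof.
by rewrite /pc -(poly_def _ (fun m => 1 / 2 ^+ m * 'C(k, m)%:R * Cay m s k%:R)).
Qed.

Lemma coef_pc s k m :
  (pc s k)`_m = 1 / 2 ^+ m * 'C(k, m)%:R * Cay m s k%:R.
Proof.
rewrite pc_poly coef_poly; case: ltnP => // lt_km.
by rewrite bin_small // mulr0 mul0r.
Qed.

Lemma size_pc s k : (size (pc s k) <= k.+1)%N.
Proof. by rewrite pc_poly size_poly. Qed.

Lemma coef0_pc s k : (pc s k)`_0 = 1.
Proof. by rewrite coef_pc bin0 Cay0 expr0 divr1 !mul1r. Qed.

Lemma Dplus_pc (s : CC) k : Dplus k%:R k%:R ((2 - k%:R - s) / 2) (pc s k) = 0.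
Proof.
have two_neq0 : (2 : CC) != 0 by rewrite pnatr_eq0.
apply/polyP => -[|i]; rewrite coef_Dplus !coef_pc coef0.
  by rewrite Cay1 Cay0 bin1 bin0 expr1 expr0; field.
have e2 := natr_mul_bin_left CC k i.+1.
have e1 := natr_mul_bin_left CC k i.
rewrite Cay_rec; set K := k%:R; set c0 := Cay i s K; set c1 := Cay i.+1 s K.
(* The coefficient identity is a linear combination of [e1] and [e2]. *)
apply: (etrans (y := (s * c1 - i.+1%:R * (K - i%:R) * c0) / 2 ^+ i.+2
                       * (i.+2%:R * 'C(k, i.+2)%:R - (K - i.+1%:R) * 'C(k, i.+1)%:R)
                     - (K - 1 - i%:R) * (K - i%:R) * c0 / 2 ^+ i.+2
                       * (i.+1%:R * 'C(k, i.+1)%:R - (K - i%:R) * 'C(k, i)%:R))).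
  rewrite !exprS; field; rewrite ?mulf_neq0 ?expf_neq0 //.
by rewrite e2 e1 !subrr !mulr0 subr0.
Qed.

Lemma Solt_eq0 k lam1 lam2 (p : {poly CC}) :
  (0 < k)%N -> lam1 + lam2 + k%:R - 2 != 0 -> Solt k k lam1 lam2 p -> p = 0.
Proof.
move=> k_gt0 hl /Solt_diag [_ hD /eqP]; rewrite scaler_eq0 (negbTE hl) => /eqP hc.
by apply: Dplus_cmt_eq0 hc hD; rewrite pnatr_eq0 -lt0n.
Qed.

Lemma Solt_pc (s : CC) k (p : {poly CC}) :
  Solt k k ((2 - k%:R - s) / 2) ((2 - k%:R + s) / 2) p <->
  exists c, p = c *: pc s k.
Proof.
have hl : (2 - k%:R - s) / 2 + (2 - k%:R + s) / 2 + k%:R - 2 = 0 by field.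
split=> [/Solt_diag [_ hD _] | [c ->]].
  exists p`_0; apply/eqP; rewrite -subr_eq0; apply/eqP.
  apply: (Dplus_eq0_coef0 k%:R k%:R ((2 - k%:R - s) / 2)).
    by rewrite DplusB DplusZ hD Dplus_pc scaler0 subrr.
  by rewrite coefB coefZ coef0_pc mulr1 subrr.
apply/Solt_diag; split; last by rewrite hl scale0r.
  exact: leq_trans (size_scale_leq _ _) (size_pc s k).
by rewrite DplusZ Dplus_pc scaler0.
Qed.

Theorem proposition6p4 (k : nat) (lam1 lam2 : CC) :
  (1 <= k)%N ->
  ((exists p : {poly CC}, Solt k k lam1 lam2 p /\ p != 0) <->
     (exists s : CC, lam1 = (2 - k%:R - s) / 2 /\ lam2 = (2 - k%:R + s) / 2))
  /\
  (forall s : CC, forall p : {poly CC},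
     Solt k k ((2 - k%:R - s) / 2) ((2 - k%:R + s) / 2) p <->
     exists c : CC, p = c *: pc s k).
Proof.
move=> k_gt0; split=> [|s p]; last exact: Solt_pc.
split=> [[p [hp p_neq0]] | [s [-> ->]]].
  have hl : lam1 + lam2 + k%:R - 2 = 0.
    by apply/eqP; apply: contraNT p_neq0 => hl; apply/eqP; move: hp; exact: Solt_eq0.
  have e : lam2 = 2 - k%:R - lam1 + (lam1 + lam2 + k%:R - 2) by ring.
  rewrite hl addr0 in e.
  by exists (lam2 - lam1); rewrite e; split; field.
exists (pc s k); split; first by apply/Solt_pc; exists 1; rewrite scale1r.
by apply/eqP => h; have := coef0_pc s k; rewrite h coef0 => /eqP; rewrite eq_sym oner_eq0.
Qed.
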